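(* Let $n\ge2$ and $q=p^h$ with $p$ prime, $h\geq1$. Let $B$ be a minimal blocking set with respect to lines of $PG(n,q)$ such that every line meets $B$ in $1\pmod{p^e}$ points, where $e$ is the largest integer with this property. Assume $p^e>3$ and $\theta_{n-1}<|B|<2q^{n-1}$. Then $$|B|\leq q^{n-1}+\frac{2q^{n-1}}{p^e}.$$
   Context: $\theta_m=(q^{m+1}-1)/(q-1)$. A blocking set with respect to lines is a point set meeting every line. It is minimal if no proper subset is a blocking set. *)

From HB Require Import structures.
From mathcomp Require Import all_boot all_order all_algebra.
Set Implicit Arguments. Unset Strict Implicit. Unset Printing Implicit Defensive.

(* PG(n,F) for a finite field F: subspaces of F^(n+1) are represented by
   their canonical generating matrices <<A>>%MS (square (n+1)x(n+1)). *)

Section PG.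
Variables (F : finFieldType) (n : nat).

Definition pg_point (P : 'M[F]_(n.+1)) : bool :=
  (\rank P == 1%N) && (<<P>>%MS == P).

Definition pg_line (L : 'M[F]_(n.+1)) : bool :=
  (\rank L == 2%N) && (<<L>>%MS == L).

Definition line_meet (B : {set 'M[F]_(n.+1)}) (L : 'M[F]_(n.+1)) : nat :=
  #|[set P in B | (P <= L)%MS]|.

Definition pg_pointset (B : {set 'M[F]_(n.+1)}) : Prop :=
  forall P, P \in B -> pg_point P.

Definition blocking_set (B : {set 'M[F]_(n.+1)}) : Prop :=
  pg_pointset B /\ forall L, pg_line L -> 0 < line_meet B L.

Definition minimal_blocking_set (B : {set 'M[F]_(n.+1)}) : Prop :=
  blocking_set B /\ forall B' : {set 'M[F]_(n.+1)}, B' \proper B -> ~ blocking_set B'.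

Definition lines_meet_1_mod (B : {set 'M[F]_(n.+1)}) (m : nat) : Prop :=
  forall L, pg_line L -> line_meet B L = 1 %[mod m].

End PG.

Definition theta (q m : nat) : nat := (q ^ m.+1 - 1) %/ (q - 1).

From HB Require Import structures.
From mathcomp Require Import all_boot all_order all_algebra.
From mathcomp Require Import zify ring lra.
Import Order.TTheory GRing.Theory Num.Theory.

(* Let q = p^h, a = p^e, b = |B| and x_L = |L \cap B| - 1 for each line L;
   the hypothesis says a divides x_L, so x_L (x_L - a) >= 0.  Double counting
   in PG(n, q) (theta_n points, theta_(n-1) lines on a point) gives
   sum x_L (x_L + 1) = b (b - 1) and sum x_L (q - x_L) = (N - b)(b - T), and
   together these yield the quadratic inequality
     g(b) = (q - a) b (b - 1) - (1 + a)(b - T)(N - b) >= 0.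
   With Q = q^(n-1) = (q - 1) s + 1, s = theta_(n-2): if 2a <= q the convex
   g is negative at Q + 2Q/a and non-positive at 2Q, hence negative between;
   if a >= q then g < 0 on (T, 2Q).  As a and q are powers of one prime, one
   case applies. *)

Lemma theta_sum (q m : nat) : 1 < q -> theta q m = \sum_(i < m.+1) q ^ i.
Proof.
move=> q1; rewrite /theta !subn1 predn_exp mulKn //; lia.
Qed.

Lemma theta_mul (q m : nat) : 1 < q -> theta q m * (q - 1) = q ^ m.+1 - 1.
Proof. by move=> q1; rewrite theta_sum // mulnC !subn1 -predn_exp. Qed.

Lemma thetaS (q m : nat) : 1 < q -> theta q m.+1 = q * theta q m + 1.
Proof.
move=> q1; rewrite !theta_sum // big_ord_recl expn0 addnC big_distrr /=.
by congr (_ + _); apply: eq_bigr => i _; rewrite expnS.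
Qed.

Section ProjectiveSpace.
Local Set Implicit Arguments.
Local Unset Strict Implicit.
Variables (F : finFieldType) (n : nat).
Local Notation M := 'M[F]_(n.+1).
Local Notation V := 'rV[F]_(n.+1).
Local Notation q := #|F|.

Definition points : {set M} := [set P | pg_point P].
Definition lines_through (Q : M) : {set M} := [set L | pg_line L && (Q <= L)%MS].

Lemma card_subspace_vectors m (S : 'M[F]_(m, n.+1)) :
  #|[set v : V | (v <= S)%MS]| = q ^ \rank S.
Proof.
have -> : [set v : V | (v <= S)%MS] =
          [set (u *m row_base S)%R | u in [set: 'rV[F]_(\rank S)]].
  apply/setP => v; rewrite inE; apply/idP/imsetP.
  - move=> vS; have: (v <= row_base S)%MS by rewrite eq_row_base.
    by case/submxP => u ->; exists u; rewrite ?inE.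
  - case=> u _ ->; apply: submx_trans (submxMl u _) _.
    by rewrite eq_row_base.
rewrite card_imset; last exact: row_free_inj (row_base_free S).
by rewrite cardsT card_mx mul1n.
Qed.

Lemma rank_point (P : M) : pg_point P -> \rank P = 1.
Proof. by case/andP=> /eqP. Qed.

Lemma point_span (v : V) : v != 0%R -> pg_point <<v>>%MS.
Proof. by move=> vnz; rewrite /pg_point mxrank_gen rank_rV vnz genmx_id eqxx. Qed.

Lemma point_spanned_by (P : M) (v : V) : pg_point P ->
  ((v <= P)%MS && (v != 0%R)) = (<<v>>%MS == P).
Proof.
move=> /andP[/eqP rP /eqP gP]; apply/idP/eqP.
- case/andP => vP vnz; rewrite -gP; apply/genmxP.
  have Pv : (P <= v)%MS by rewrite -(mxrank_leqif_sup vP).2 rP rank_rV vnz.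
  by apply/andP.
- move=> e; rewrite -e genmxE submx_refl /=.
  by move: rP; rewrite -e mxrank_gen rank_rV; case: (v != 0%R).
Qed.

(* A subspace of rank r contains (q^r - 1)/(q - 1) points: group its nonzero
   vectors by the point they span. *)
Lemma card_points_in m (S : 'M[F]_(m, n.+1)) :
  #|[set P : M | pg_point P && (P <= S)%MS]| * (q - 1) = q ^ \rank S - 1.
Proof.
have card_nonzero m' (S' : 'M[F]_(m', n.+1)) :
    #|[set v : V | (v <= S')%MS && (v != 0%R)]| = q ^ \rank S' - 1.
  rewrite -card_subspace_vectors (cardsD1 0%R [set v : V | (v <= S')%MS]).
  rewrite inE sub0mx add1n subSS subn0; apply: eq_card => v.
  by rewrite !inE andbC.
rewrite -card_nonzero -[RHS]sum1dep_card.
rewrite (partition_big (fun v : V => <<v>>%MS : M)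
           (fun P : M => pg_point P && (P <= S)%MS)) /=; last first.
  by move=> v /andP[vS vnz]; rewrite point_span //= genmxE.
rewrite -sum1dep_card big_distrl /=; apply: eq_bigr => P /andP[pP PS].
have -> : q - 1 = #|[set v : V | (v <= P)%MS && (v != 0%R)]|.
  by rewrite card_nonzero rank_point // expn1.
rewrite mul1n -sum1dep_card; apply: eq_bigl => v.
rewrite -(point_spanned_by v pP); apply/idP/idP.
- by case/andP=> vP ->; rewrite (submx_trans vP PS) vP.
- by case/andP=> /andP[vS ->] /andP[-> _].
Qed.

Lemma card_line_points (L : M) : 1 < q -> pg_line L ->
  #|[set P : M | pg_point P && (P <= L)%MS]| = q.+1.
Proof.
move=> q1 /andP[/eqP rL _]; have := card_points_in L; rewrite rL => count.
apply/eqP; rewrite -(eqn_pmul2r (_ : 0 < q - 1)) ?subn_gt0 // count.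
by rewrite expnS expn1; apply/eqP; nia.
Qed.

Lemma card_points : 1 < q -> #|points| = theta q n.
Proof.
move=> q1; apply/eqP; rewrite -(eqn_pmul2r (_ : 0 < q - 1)) ?subn_gt0 //.
rewrite theta_mul // -[in X in _ == X](mxrank1 F n.+1) -card_points_in.
by apply/eqP; congr (_ * _); apply: eq_card => P; rewrite !inE submx1 andbT.
Qed.

Lemma unique_line (P R : M) : pg_point P -> pg_point R -> P != R ->
  [set L : M | pg_line L && (P <= L)%MS && (R <= L)%MS] = [set <<(P + R)%MS>>%MS].
Proof.
move=> pP pR PR.
have r2 : \rank (P + R)%MS = 2.
  have le2 : \rank (P + R)%MS <= 2.
    by have := (mxrank_adds_leqif P R).1; rewrite (rank_point pP) (rank_point pR).
  have ge1 : 1 <= \rank (P + R)%MS.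
    by rewrite -(rank_point pP); apply: mxrankS; apply: addsmxSl.
  apply/eqP; rewrite eqn_leq le2 /= ltn_neqAle ge1 andbT.
  apply/negP => /eqP r1; move/negP: PR; apply.
  have eP : (P == P + R)%MS.
    by rewrite -(mxrank_leqif_eq (addsmxSl P R)).2 rank_point // r1.
  have eR : (R == P + R)%MS.
    by rewrite -(mxrank_leqif_eq (addsmxSr P R)).2 rank_point // r1.
  have /andP[_ /eqP gP] := pP; have /andP[_ /eqP gR] := pR.
  move/eqmxP: eP => eP; move/eqmxP: eR => eR.
  by rewrite -gP -gR; apply/eqP/genmxP/eqmxP; apply: eqmx_trans eP (eqmx_sym eR).
apply/setP => L; rewrite !inE; apply/idP/eqP.
- case/andP=> /andP[/andP[/eqP rL /eqP gL] PL] RL.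
  have PRL : (P + R <= L)%MS by rewrite addsmx_sub PL RL.
  by rewrite -gL; apply/esym/genmxP; rewrite -(mxrank_leqif_eq PRL).2 r2 rL.
- move=> ->; rewrite /pg_line mxrank_gen r2 genmx_id eqxx /= !genmxE.
  by rewrite eqxx addsmxSl addsmxSr.
Qed.

Lemma sum_indicator (T : finType) (A b : pred T) :
  \sum_(x | A x) (b x : nat) = #|[set x | A x && b x]|.
Proof. by rewrite -sum1dep_card big_mkcondr /=; apply: eq_bigr => x _; case: (b x). Qed.

(* The lines through Q partition the points other than Q: counting the points
   of any point set X this way recovers |X \ Q|. *)
Lemma sum_lines_through (X : {set M}) (Q : M) : pg_point Q -> {subset X <= points} ->
  \sum_(L | pg_line L && (Q <= L)%MS) #|[set P in X | (P <= L)%MS & P != Q]| = #|X :\ Q|.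
Proof.
move=> pQ pX.
transitivity (\sum_(L | pg_line L && (Q <= L)%MS) \sum_(P in X :\ Q) ((P <= L)%MS : nat)).
  apply: eq_bigr => L _; rewrite -sum1dep_card big_mkcond [RHS]big_mkcond /=.
  apply: eq_bigr => P _; rewrite !inE.
  by case: (P \in X); case: (P == Q); case: (P <= L)%MS.
rewrite exchange_big /= -sum1_card; apply: eq_bigr => P; rewrite !inE => /andP[PQ PX].
have pP : pg_point P by have := pX _ PX; rewrite inE.
by rewrite sum_indicator (unique_line pQ pP) ?cards1 // eq_sym.
Qed.

Lemma card_lines_through (Q : M) : 1 < q -> 0 < n -> pg_point Q ->
  #|lines_through Q| = theta q n.-1.
Proof.
move=> q1 n0 pQ; apply/eqP; rewrite -(eqn_pmul2r (ltnW q1)).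
have <- : #|points| - 1 = theta q n.-1 * q.
  by rewrite card_points // -(prednK n0) thetaS // addnK mulnC.
rewrite (cardsD1 Q points) inE pQ add1n subSS subn0.
rewrite -(@sum_lines_through points Q pQ (fun P => id)) -sum_nat_cond_const.
apply/eqP; apply: eq_bigr => L /andP[lL QL].
have := card_line_points q1 lL; rewrite (cardsD1 Q) inE pQ QL add1n => -[<-].
by apply: eq_card => P; rewrite !inE andbC andbA.
Qed.

End ProjectiveSpace.

Section BlockingSetCounts.
Local Set Implicit Arguments.
Local Unset Strict Implicit.
Variables (F : finFieldType) (n : nat) (B : {set 'M[F]_(n.+1)}).
Local Notation M := 'M[F]_(n.+1).
Local Notation q := #|F|.
Local Notation b := #|B|.
Hypothesis pB : pg_pointset B.
Hypothesis blockB : forall L, pg_line L -> 0 < line_meet B L.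

Let B_points : {subset B <= points F n}.
Proof. by move=> P PB; rewrite inE pB. Qed.

Let card_outside : #|[set P : M | pg_point P && (P \notin B)]| = #|points F n| - b.
Proof.
rewrite -(cardsID B (points F n)) (setIidPr (introT subsetP B_points)) addKn.
by apply: eq_card => P; rewrite !inE andbC.
Qed.

Lemma sum_meet_through_outside (Q : M) : pg_point Q -> Q \notin B ->
  \sum_(L | pg_line L && (Q <= L)%MS) line_meet B L = b.
Proof.
move=> pQ QB; rewrite (cardsD1 Q B) (negbTE QB) add0n -(sum_lines_through pQ B_points).
apply: eq_bigr => L _; apply: eq_card => P; rewrite !inE.
by case: (eqVneq P Q) => [->|_]; rewrite ?(negbTE QB) ?andbT.
Qed.

(* Ordered pairs of distinct points of B, grouped by the line joining them. *)
Lemma sum_meet_pairs :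
  \sum_(L | pg_line L) line_meet B L * (line_meet B L - 1) = b * (b - 1).
Proof.
transitivity (\sum_(L | pg_line L) \sum_(Q | (Q \in B) && (Q <= L)%MS)
                 #|[set P in B | (P <= L)%MS & P != Q]|).
  apply: eq_bigr => L _; rewrite /line_meet -sum_nat_cond_const.
  apply: eq_bigr => Q QL; rewrite (cardsD1 Q) inE QL add1n subSS subn0.
  by apply: eq_card => P; rewrite !inE andbC andbA.
rewrite (exchange_big_dep (fun Q => Q \in B)) /=; last by move=> L Q _ /andP[].
rewrite -[b in b * _](@eq_card _ [set Q | Q \in B]) => [|Q]; last by rewrite inE.
rewrite -sum_nat_cond_const; apply: eq_bigr => Q QB.
by rewrite (cardsD1 Q B) QB add1n subSS subn0 -(sum_lines_through (pB QB) B_points).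
Qed.

(* Each line through a point outside B carries at least one point of B. *)
Lemma sum_excess_through_outside (Q : M) : 1 < q -> 0 < n -> pg_point Q -> Q \notin B ->
  \sum_(L | pg_line L && (Q <= L)%MS) (line_meet B L - 1) = b - theta q n.-1.
Proof.
move=> q1 n0 pQ QB.
rewrite -(card_lines_through q1 n0 pQ) -(sum_meet_through_outside pQ QB).
rewrite -sum1dep_card.
have split : \sum_(L | pg_line L && (Q <= L)%MS) line_meet B L =
  \sum_(L | pg_line L && (Q <= L)%MS) (line_meet B L - 1) + \sum_(L | pg_line L && (Q <= L)%MS) 1.
  rewrite -big_split /=; apply: eq_bigr => L /andP[lL _].
  by rewrite subn1 addn1 prednK // blockB.
by rewrite split addnK.
Qed.

Lemma card_line_outside (L : M) : 1 < q -> pg_line L ->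
  #|[set P : M | (pg_point P && (P \notin B)) && (P <= L)%MS]| = q.+1 - line_meet B L.
Proof.
move=> q1 lL; rewrite -(card_line_points q1 lL).
rewrite -(cardsID B [set P : M | pg_point P && (P <= L)%MS]).
have -> : [set P : M | pg_point P && (P <= L)%MS] :&: B = [set P in B | (P <= L)%MS].
  apply/setP => P; rewrite !inE andbC.
  by case PB: (P \in B); rewrite //= (pB PB).
rewrite addKn; apply: eq_card => P; rewrite !inE.
by case: (P \in B); case: (pg_point P).
Qed.

(* Pairs (Q, L) with Q a point outside B on a line L, weighted by the excess of L. *)
Lemma sum_excess_outside : 1 < q -> 0 < n ->
  \sum_(L | pg_line L) (line_meet B L - 1) * (q.+1 - line_meet B L)
    = (#|points F n| - b) * (b - theta q n.-1).
Proof.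
move=> q1 n0.
transitivity (\sum_(L | pg_line L)
   \sum_(Q | (pg_point Q && (Q \notin B)) && (Q <= L)%MS) (line_meet B L - 1)).
  by apply: eq_bigr => L lL; rewrite sum_nat_cond_const card_line_outside // mulnC.
rewrite (exchange_big_dep (fun Q => pg_point Q && (Q \notin B))) /=; last first.
  by move=> L Q _ /andP[].
rewrite -card_outside -sum_nat_cond_const; apply: eq_bigr => Q /andP[pQ QB].
rewrite -(sum_excess_through_outside q1 n0 pQ QB); apply: eq_bigl => L.
by rewrite pQ QB.
Qed.
End BlockingSetCounts.

Section Quadratic.
Local Open Scope ring_scope.
Local Set Implicit Arguments.
Local Unset Strict Implicit.
Variable R : realFieldType.
Implicit Types (q a s b : R).

Lemma quadratic_neg_between (alpha beta gamma x0 x1 x : R) :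
  0 <= alpha -> x0 <= x -> x < x1 ->
  alpha * x0 ^+ 2 + beta * x0 + gamma < 0 ->
  alpha * x1 ^+ 2 + beta * x1 + gamma <= 0 ->
  alpha * x ^+ 2 + beta * x + gamma < 0.
Proof.
move=> alpha_ge0 lex0x ltxx1 f0 f1.
have interp : (x1 - x0) * (alpha * x ^+ 2 + beta * x + gamma) =
    (x1 - x) * (alpha * x0 ^+ 2 + beta * x0 + gamma)
  + (x - x0) * (alpha * x1 ^+ 2 + beta * x1 + gamma)
  - alpha * ((x - x0) * (x1 - x)) * (x1 - x0) by ring.
have bend : 0 <= alpha * ((x - x0) * (x1 - x)) * (x1 - x0).
  by rewrite !mulr_ge0 // subr_ge0 // ltW // (le_lt_trans lex0x).
have left : (x1 - x) * (alpha * x0 ^+ 2 + beta * x0 + gamma) < 0.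
  by rewrite pmulr_rlt0 // subr_gt0.
have right : (x - x0) * (alpha * x1 ^+ 2 + beta * x1 + gamma) <= 0.
  by rewrite mulr_ge0_le0 // subr_ge0.
have : (x1 - x0) * (alpha * x ^+ 2 + beta * x + gamma) < 0 by rewrite interp; lra.
by rewrite pmulr_rlt0 // subr_gt0 (le_lt_trans lex0x).
Qed.

Definition incidence_quadratic q a T N b : R :=
  (q - a) * b * (b - 1) - (1 + a) * (b - T) * (N - b).

Lemma incidence_quadratic_expand q a T N b :
  incidence_quadratic q a T N b =
  (q + 1) * b ^+ 2 + (- (q - a) - (1 + a) * (T + N)) * b + (1 + a) * T * N.
Proof. rewrite /incidence_quadratic; ring. Qed.

(* g(2Q) <= 0 for T = qs + 1, N = qT + 1, Q = (q - 1)s + 1: an exact sum of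
   non-positive terms. *)
Lemma incidence_quadratic_at_double q a s :
  3 <= a -> a <= q -> 0 <= s ->
  incidence_quadratic q a (q * s + 1) (q * (q * s + 1) + 1) (2 * ((q - 1) * s + 1)) <= 0.
Proof.
move=> a3 aq s0; set Q := (q - 1) * s + 1.
have -> : incidence_quadratic q a (q * s + 1) (q * (q * s + 1) + 1) (2 * Q) =
  - ((a - 3) * q + 2 * a - 2) * Q ^+ 2 - (2 * q - a + 1) * Q - (1 + a) * s * (Q - s).
  rewrite /incidence_quadratic /Q; ring.
have Qs : s <= Q by rewrite /Q; nra.
have Q0 : 0 <= Q by lra.
have c2 : 0 <= ((a - 3) * q + 2 * a - 2) * Q ^+ 2.
  by rewrite mulr_ge0 ?sqr_ge0 //; nra.
have c1 : 0 <= (2 * q - a + 1) * Q by rewrite mulr_ge0 //; lra.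
have c0 : 0 <= (1 + a) * s * (Q - s) by rewrite !mulr_ge0 //; lra.
lra.
Qed.

(* g(Q + 2Q/a) < 0 when 4 <= a and 2a <= q: after scaling by a^2 it is a
   quadratic C2 s^2 + C1 s + C0 in s with C2, C1 <= 0 < -C0. *)
Lemma incidence_quadratic_at_bound q a s Q :
  4 <= a -> 2 * a <= q -> 0 <= s -> Q = (q - 1) * s + 1 ->
  incidence_quadratic q a (q * s + 1) (q * (q * s + 1) + 1) (Q + 2 * Q / a) < 0.
Proof.
move=> a4 aq s0 ->.
pose C2 := - q * (q ^+ 2 * (a ^+ 2 - 2 * a - 4) - (a + 2) * (a ^+ 2 - 2))
           - (a + 2) ^+ 2 * (q ^+ 2 - 1).
pose C1 := - (a - 2) * (q ^+ 2 * (3 * a + 4) - (a + 2) ^+ 2) - 2 * q * a * (a + 1).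
pose C0 := - 2 * (a ^+ 2 - 2) * (q + 1).
have a0 : a != 0 by apply/eqP => a0; rewrite a0 in a4; lra.
have scaled : a ^+ 2 * incidence_quadratic q a (q * s + 1) (q * (q * s + 1) + 1)
                 ((q - 1) * s + 1 + 2 * ((q - 1) * s + 1) / a)
    = C2 * s ^+ 2 + C1 * s + C0.
  by rewrite /incidence_quadratic /C2 /C1 /C0; field.
have qsq : 4 * a ^+ 2 <= q ^+ 2 by nra.
have C2le0 : C2 <= 0.
  have gap : (a + 2) * (a ^+ 2 - 2) <= q ^+ 2 * (a ^+ 2 - 2 * a - 4).
    have : 4 * a ^+ 2 * (a ^+ 2 - 2 * a - 4) <= q ^+ 2 * (a ^+ 2 - 2 * a - 4).
      by rewrite ler_wpM2r //; nra.
    have quartic : 0 <= a ^+ 2 * ((a - 4) * (4 * a + 7) + 10).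
      by rewrite mulr_ge0 ?sqr_ge0 //; nra.
    nra.
  have t1 : 0 <= q * (q ^+ 2 * (a ^+ 2 - 2 * a - 4) - (a + 2) * (a ^+ 2 - 2)).
    by rewrite mulr_ge0 // ?subr_ge0 //; lra.
  have t2 : 0 <= (a + 2) ^+ 2 * (q ^+ 2 - 1) by rewrite mulr_ge0 ?sqr_ge0 //; nra.
  rewrite /C2; lra.
have C1le0 : C1 <= 0.
  have big : (a + 2) ^+ 2 <= q ^+ 2 * (3 * a + 4) by nra.
  have t1 : 0 <= (a - 2) * (q ^+ 2 * (3 * a + 4) - (a + 2) ^+ 2).
    by rewrite mulr_ge0 // subr_ge0 //; lra.
  have t2 : 0 <= q * a * (a + 1) by rewrite !mulr_ge0 //; lra.
  rewrite /C1; lra.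
have C0lt0 : C0 < 0.
  have : 0 < (a ^+ 2 - 2) * (q + 1) by rewrite mulr_gt0 //; nra.
  rewrite /C0; lra.
have : C2 * s ^+ 2 + C1 * s + C0 < 0.
  have t2 : C2 * s ^+ 2 <= 0 by rewrite mulr_le0_ge0 ?sqr_ge0.
  have t1 : C1 * s <= 0 by rewrite mulr_le0_ge0.
  lra.
by rewrite -scaled pmulr_rlt0 // exprn_gt0 // lt_neqAle eq_sym a0 /=; lra.
Qed.

Lemma incidence_quadratic_neg_large_modulus q a s b :
  1 < q -> q <= a -> 0 <= s ->
  q * s + 1 < b -> b < 2 * ((q - 1) * s + 1) ->
  incidence_quadratic q a (q * s + 1) (q * (q * s + 1) + 1) b < 0.
Proof.
move=> q1 qa s0 lowb upb.
have belowN : b < q * (q * s + 1) + 1.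
  have : 0 <= ((q - 1) ^+ 2 + 1) * s by rewrite mulr_ge0 //; nra.
  nra.
have pos : 0 < (1 + a) * (b - (q * s + 1)) * (q * (q * s + 1) + 1 - b).
  by rewrite !mulr_gt0 //; lra.
have nonpos : (q - a) * b * (b - 1) <= 0.
  rewrite -mulrA mulr_le0_ge0 //; first lra.
  by rewrite mulr_ge0 //; nra.
rewrite /incidence_quadratic; lra.
Qed.

Lemma incidence_quadratic_bound q a s b :
  4 <= a -> 1 < q -> 0 <= s -> 2 * a <= q \/ q <= a ->
  q * s + 1 < b -> b < 2 * ((q - 1) * s + 1) ->
  0 <= incidence_quadratic q a (q * s + 1) (q * (q * s + 1) + 1) b ->
  b <= (q - 1) * s + 1 + 2 * ((q - 1) * s + 1) / a.
Proof.
move=> a4 q1 s0 [aq|qa] lowb upb g_ge0; last first.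
  by have := incidence_quadratic_neg_large_modulus q1 qa s0 lowb upb; lra.
set Q := (q - 1) * s + 1 in upb *.
rewrite leNgt; apply/negP => b0b; move: g_ge0; apply/negP; rewrite -ltNge.
rewrite incidence_quadratic_expand.
apply: (quadratic_neg_between _ (ltW b0b) upb).
- lra.
- rewrite -incidence_quadratic_expand; exact: incidence_quadratic_at_bound.
- rewrite -incidence_quadratic_expand; apply: incidence_quadratic_at_double => //; lra.
Qed.
End Quadratic.

(* The moment relations sum x(x+1) = b(b-1), sum x(q-x) = (N-b)(b-T) and
   a sum x <= sum x^2 give g(b) = (q+1)(sum x^2 - a sum x) >= 0. *)
Lemma quadratic_from_moments (q a b T N S1 S2 : nat) :
  T < b -> b <= N -> S2 + S1 = b * (b - 1) -> (N - b) * (b - T) + S2 = q * S1 ->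
  S1 * a <= S2 ->
  (0 <= incidence_quadratic q%:R a%:R T%:R N%:R b%:R :> rat)%R.
Proof.
move=> Tb bN pairs defect excess_sq.
have pairs0 : (b%:R * (b%:R - 1) - S2%:R - S1%:R = 0 :> rat)%R.
  have pairsR : (S2%:R + S1%:R = b%:R * (b%:R - 1) :> rat)%R.
    by rewrite -natrD pairs natrM natrB //; lia.
  by rewrite -pairsR; ring.
have defect0 : ((N%:R - b%:R) * (b%:R - T%:R) + S2%:R - q%:R * S1%:R = 0 :> rat)%R.
  move/(congr1 (fun k => k%:R : rat)): defect.
  by rewrite natrD !natrM (natrB _ bN) (natrB _ (ltnW Tb)) => ->; rewrite subrr.
have -> : incidence_quadratic q%:R a%:R T%:R N%:R b%:R =
          ((q%:R + 1) * (S2%:R - S1%:R * a%:R)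
           + (q%:R - a%:R) * (b%:R * (b%:R - 1) - S2%:R - S1%:R)
           - (1 + a%:R) * ((N%:R - b%:R) * (b%:R - T%:R) + S2%:R - q%:R * S1%:R) : rat)%R.
  by rewrite /incidence_quadratic; ring.
rewrite pairs0 defect0 !mulr0 addr0 subr0.
by rewrite mulr_ge0 // ?subr_ge0 -?natrM ?ler_nat // addr_ge0.
Qed.

Lemma blocking_quadratic_nonneg {F : finFieldType} {n a : nat} {B : {set 'M[F]_(n.+1)}} :
  1 < #|F| -> 0 < n -> pg_pointset B -> (forall L, pg_line L -> 0 < line_meet B L) ->
  (forall L, pg_line L -> a %| line_meet B L - 1) -> theta #|F| n.-1 < #|B| ->
  (0 <= incidence_quadratic #|F|%:R a%:R (theta #|F| n.-1)%:R (theta #|F| n)%:R #|B|%:R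
     :> rat)%R.
Proof.
move=> q1 n0 pB blockB adiv Tb.
set q := #|F|; set b := #|B|; set T := theta q n.-1; set N := theta q n.
set x := fun L => line_meet B L - 1.
set S1 := \sum_(L | pg_line L) x L; set S2 := \sum_(L | pg_line L) x L * x L.
have x_le_q L : pg_line L -> x L <= q.
  move=> lL; rewrite /x leq_subLR add1n -(card_line_points q1 lL).
  apply: subset_leq_card; apply/subsetP => P; rewrite !inE => /andP[PB ->].
  by rewrite (pB _ PB).
have pairs : S2 + S1 = b * (b - 1).
  rewrite -sum_meet_pairs // -big_split; apply: eq_bigr => L lL.
  rewrite /x; case: (line_meet B L) (blockB L lL) => // m _.
  by rewrite subn1 /= mulSn addnC.
have defect : (N - b) * (b - T) + S2 = q * S1.
  rewrite /N -card_points // -sum_excess_outside // big_distrr -big_split /=.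
  apply: eq_bigr => L lL; rewrite -/(x L).
  have -> : q.+1 - line_meet B L = q - x L by rewrite /x subnBA ?blockB // addn1.
  by rewrite -mulnDr subnK ?x_le_q // mulnC.
have excess_sq : S1 * a <= S2.
  rewrite big_distrl /=; apply: leq_sum => L lL.
  have [->|x0] := posnP (x L); first by [].
  by rewrite leq_mul2l dvdn_leq ?adiv ?orbT.
have bN : b <= N.
  rewrite /N -card_points //; apply: subset_leq_card; apply/subsetP => P PB.
  by rewrite inE pB.
exact: quadratic_from_moments Tb bN pairs defect excess_sq.
Qed.

Lemma prime_power_gap (p e h : nat) : prime p -> 2 * p ^ e <= p ^ h \/ p ^ h <= p ^ e.
Proof.
move=> pp; have p2 := prime_gt1 pp.
case: (ltnP e h) => [eh|he]; [left | right]; last by rewrite leq_pexp2l ?prime_gt0.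
apply: leq_trans (_ : p ^ e.+1 <= _); last by rewrite leq_pexp2l ?prime_gt0.
by rewrite expnS leq_mul2r p2 orbT.
Qed.

Lemma theta_parameters {q n : nat} : 1 < q -> 2 <= n ->
  let s := theta q n.-2 in
  [/\ theta q n.-1 = q * s + 1, theta q n = q * (q * s + 1) + 1
    & q ^ n.-1 = (q - 1) * s + 1].
Proof.
move=> q1; case: n => [|[|m]] // _ /=.
rewrite !thetaS //; split=> //.
by rewrite mulnC theta_mul // subnK // expn_gt0; lia.
Qed.

Theorem theorem2 (n p h e : nat) (F : finFieldType) (B : {set 'M[F]_(n.+1)}) :
  2 <= n -> prime p -> 1 <= h -> #|F| = p ^ h ->
  minimal_blocking_set B ->
  lines_meet_1_mod B (p ^ e) ->
  (forall e', lines_meet_1_mod B (p ^ e') -> e' <= e) ->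
  3 < p ^ e ->
  theta (p ^ h) n.-1 < #|B| < 2 * (p ^ h) ^ n.-1 ->
  ((#|B|%:R : rat) <= ((p ^ h) ^ n.-1)%:R + 2%:R * ((p ^ h) ^ n.-1)%:R / (p ^ e)%:R)%R.
Proof.
move=> n2 pp h1 cF [[pB blockB] _] meet1 _ a3 /andP[lowb upb].
rewrite -cF in lowb upb *.
have q1 : 1 < #|F| by rewrite cF -(expn0 p) ltn_exp2l ?prime_gt1.
have a_div L : pg_line L -> p ^ e %| line_meet B L - 1.
  by move=> lL; rewrite -eqn_mod_dvd ?blockB // meet1.
have := blocking_quadratic_nonneg q1 (ltnW n2) pB blockB a_div lowb.
have [T_eq -> Q_eq] := theta_parameters q1 n2; rewrite T_eq in lowb *.
rewrite Q_eq in upb *; set q := #|F| in q1 lowb upb *.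
set s := theta q n.-2 in lowb upb *; set a := p ^ e in a3 *.
rewrite !(natrD, natrM) natrB 1?ltnW // => quad_ge0.
apply: incidence_quadratic_bound quad_ge0.
- by rewrite ler_nat.
- by rewrite ltr1n.
- by [].
- by rewrite -natrM !ler_nat /q cF; apply: prime_power_gap.
- by move: lowb; rewrite -(ltr_nat rat) natrD natrM.
- by move: upb; rewrite -(ltr_nat rat) natrM natrD natrM natrB 1?ltnW.
Qed.
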